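(* Let $p$ be an odd prime and $\mathbf{k}=(k_1,k_2)$ with $k_1>k_2>0$. Let $a,c$ be positive integers with $0<k_1c\le p-1$ and $a+(k_1-1)c<p-1$. Then $$(a,\;p-1-(a+(k_1-1)c),\;(k_1-k_2+1)c-1,\;c)\in\mathcal{A}_{\mathbf{k}}.$$
   Context: Define, for integers $a,b_1,b_2,c$, the formal expression $$R_{\mathbf{k}}(a,b_1,b_2,c)=(-1)^{k_1+k_2}\prod_{i=1}^{k_1-k_2}\frac{(b_1+(i-1)c)!}{(1+a+b_1+(i+k_1-2)c-p)!}\prod_{i=1}^{k_2}\frac{(b_2+(i-1)c)!}{(1+b_2+(i+k_2-k_1-2)c)!}\cdot\frac{(1+b_1+b_2+(i-2)c)!}{(2+a+b_1+b_2+(i+k_1-3)c-p)!}$$ $$\times\prod_{i=1}^{k_1}(a+(i-1)c)!\prod_{i=1}^{k_2}(p+(i-k_1-1)c)!\prod_{r=1}^2\prod_{i=1}^{k_r}\frac{(ic)!}{c!}.$$ $\mathcal{A}_{\mathbf{k}}$ is the set of $(a,b_1,b_2,c)\in\mathbb{Z}_{>0}^4$ with $a+(k_1-1)c<p-1$ such that every factorial $x!$ appearing in this expression satisfies $0\le x<p$. *)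

From mathcomp Require Import all_boot all_order all_algebra.
Set Implicit Arguments. Unset Strict Implicit. Unset Printing Implicit Defensive.
Import Order.TTheory GRing.Theory Num.Theory.
Local Open Scope ring_scope.

Definition fact_ok (p : nat) (x : int) : Prop := 0 <= x /\ x < p%:Z.

(* Membership of (a,b1,b2,c) in the set A_k, k = (k1,k2): every factorial
   argument occurring in R_k(a,b1,b2,c) lies in [0,p). *)
Definition in_A (p k1 k2 : nat) (a b1 b2 c : int) : Prop :=
  [/\ 0 < a, 0 < b1, 0 < b2 & 0 < c] /\
  (a + (k1%:Z - 1) * c < p%:Z - 1) /\
      (forall i : nat, (1 <= i <= k1 - k2)%N ->
         fact_ok p (b1 + (i%:Z - 1) * c) /\
         fact_ok p (1 + a + b1 + (i%:Z + k1%:Z - 2) * c - p%:Z)) /\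
      (forall i : nat, (1 <= i <= k2)%N ->
         [/\ fact_ok p (b2 + (i%:Z - 1) * c),
             fact_ok p (1 + b2 + (i%:Z + k2%:Z - k1%:Z - 2) * c),
             fact_ok p (1 + b1 + b2 + (i%:Z - 2) * c) &
             fact_ok p (2 + a + b1 + b2 + (i%:Z + k1%:Z - 3) * c - p%:Z)]) /\
      (forall i : nat, (1 <= i <= k1)%N -> fact_ok p (a + (i%:Z - 1) * c)) /\
      (forall i : nat, (1 <= i <= k2)%N -> fact_ok p (p%:Z + (i%:Z - k1%:Z - 1) * c)) /\
      (* (ic)!/c!, r = 1,2, i = 1 .. k_r *)
      (forall i : nat, ((1 <= i <= k1) || (1 <= i <= k2))%N ->
         fact_ok p (i%:Z * c) /\ fact_ok p c).

(* Substituting b1 = p-1-(a+(k1-1)c) and b2 = (k1-k2+1)c-1, every factorial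
   argument of R_k becomes one of  j c,  j c - 1,  p - j c,  a + j c  or
   p - 1 - a - j c,  with j in a range inside [0, k1].  These all lie in [0, p)
   because 0 < c, k1 c <= p - 1 and a + (k1-1)c < p - 1. *)

From mathcomp Require Import all_boot all_order all_algebra.
From mathcomp Require Import zify ring.
Set Implicit Arguments. Unset Strict Implicit. Unset Printing Implicit Defensive.
Import Order.TTheory GRing.Theory Num.Theory.
Local Open Scope ring_scope.

Section Multiples.

Variables (p : nat) (n c : int).
Hypotheses (c_gt0 : 0 < c) (nc_lt : n * c < p%:Z).

Lemma fact_ok_mul (j x : int) : x = j * c -> 0 <= j <= n -> fact_ok p x.
Proof.
move=> -> /andP[j_ge0 j_le]; have := ler_wpM2r (ltW c_gt0) j_le.
by split; [exact: mulr_ge0 (ltW c_gt0) | lia].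
Qed.

Lemma fact_ok_mul_pred (j x : int) : x = j * c - 1 -> 1 <= j <= n -> fact_ok p x.
Proof.
move=> -> /andP[j_ge1 j_le].
have := ler_wpM2r (ltW c_gt0) j_ge1; have := ler_wpM2r (ltW c_gt0) j_le.
by split; lia.
Qed.

Lemma fact_ok_sub_mul (j x : int) : x = p%:Z - j * c -> 1 <= j <= n -> fact_ok p x.
Proof.
move=> -> /andP[j_ge1 j_le].
have := ler_wpM2r (ltW c_gt0) j_ge1; have := ler_wpM2r (ltW c_gt0) j_le.
by split; lia.
Qed.

End Multiples.

Section ShiftedMultiples.

Variables (p : nat) (m a c : int).
Hypotheses (a_gt0 : 0 < a) (c_gt0 : 0 < c) (amc_lt : a + m * c < p%:Z - 1).

Lemma fact_ok_add_mul (j x : int) : x = a + j * c -> 0 <= j <= m -> fact_ok p x.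
Proof.
move=> -> /andP[j_ge0 j_le].
have := ler_wpM2r (ltW c_gt0) j_ge0; have := ler_wpM2r (ltW c_gt0) j_le.
by split; lia.
Qed.

Lemma fact_ok_sub_add_mul (j x : int) :
  x = p%:Z - 1 - a - j * c -> 0 <= j <= m -> fact_ok p x.
Proof.
move=> -> /andP[j_ge0 j_le].
have := ler_wpM2r (ltW c_gt0) j_ge0; have := ler_wpM2r (ltW c_gt0) j_le.
by split; lia.
Qed.

End ShiftedMultiples.

Section Witness.

Variables (p k1 k2 : nat) (a c : int).
Hypotheses (k2_gt0 : (0 < k2)%N) (k2_lt_k1 : (k2 < k1)%N).
Hypotheses (a_gt0 : 0 < a) (c_gt0 : 0 < c).
Hypotheses (k1c_le : k1%:Z * c <= p%:Z - 1) (top_lt : a + (k1%:Z - 1) * c < p%:Z - 1).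

Let k1c_lt : k1%:Z * c < p%:Z.
Proof. lia. Qed.

Let b1 := p%:Z - 1 - (a + (k1%:Z - 1) * c).
Let b2 := (k1%:Z - k2%:Z + 1) * c - 1.

Lemma b2_gt0 : 0 < b2.
Proof.
have := ler_wpM2r (ltW c_gt0) (_ : 1 <= k1%:Z - k2%:Z); rewrite /b2; lia.
Qed.

Lemma first_product_ok (i : nat) : (1 <= i <= k1 - k2)%N ->
  fact_ok p (b1 + (i%:Z - 1) * c) /\
  fact_ok p (1 + a + b1 + (i%:Z + k1%:Z - 2) * c - p%:Z).
Proof.
move=> /andP[i_ge1 i_le]; rewrite /b1; split.
- by apply: (fact_ok_sub_add_mul a_gt0 c_gt0 top_lt (j := k1%:Z - i%:Z)); [ring | lia].
- by apply: (fact_ok_mul c_gt0 k1c_lt (j := i%:Z - 1)); [ring | lia].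
Qed.

Lemma second_product_ok (i : nat) : (1 <= i <= k2)%N ->
  [/\ fact_ok p (b2 + (i%:Z - 1) * c),
      fact_ok p (1 + b2 + (i%:Z + k2%:Z - k1%:Z - 2) * c),
      fact_ok p (1 + b1 + b2 + (i%:Z - 2) * c) &
      fact_ok p (2 + a + b1 + b2 + (i%:Z + k1%:Z - 3) * c - p%:Z)].
Proof.
move=> /andP[i_ge1 i_le]; rewrite /b1 /b2; split.
- by apply: (fact_ok_mul_pred c_gt0 k1c_lt (j := k1%:Z - k2%:Z + i%:Z)); [ring | lia].
- by apply: (fact_ok_mul c_gt0 k1c_lt (j := i%:Z - 1)); [ring | lia].
- by apply: (fact_ok_sub_add_mul a_gt0 c_gt0 top_lt (j := k2%:Z - i%:Z)); [ring | lia].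
- by apply: (fact_ok_mul c_gt0 k1c_lt (j := k1%:Z - k2%:Z + i%:Z - 1)); [ring | lia].
Qed.

Lemma in_A_witness : in_A p k1 k2 a b1 b2 c.
Proof.
split; first by split=> //; [rewrite /b1; lia | exact: b2_gt0].
split=> //; split; first exact: first_product_ok.
split; first exact: second_product_ok.
split=> [i /andP[i_ge1 i_le] | ].
  by apply: (fact_ok_add_mul a_gt0 c_gt0 top_lt (j := i%:Z - 1)); lia.
split=> [i /andP[i_ge1 i_le] | i i_range].
  by apply: (fact_ok_sub_mul c_gt0 k1c_lt (j := k1%:Z + 1 - i%:Z)); [ring | lia].
split; first by apply: (fact_ok_mul c_gt0 k1c_lt (j := i%:Z)); lia.
by apply: (fact_ok_mul c_gt0 k1c_lt (j := 1)); [rewrite mul1r | lia].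
Qed.

End Witness.

Theorem lemma5p5 (p k1 k2 : nat) (a c : int) :
  prime p -> odd p -> (0 < k2)%N -> (k2 < k1)%N ->
  0 < a -> 0 < c ->
  0 < k1%:Z * c -> k1%:Z * c <= p%:Z - 1 ->
  a + (k1%:Z - 1) * c < p%:Z - 1 ->
  in_A p k1 k2 a (p%:Z - 1 - (a + (k1%:Z - 1) * c))
       ((k1%:Z - k2%:Z + 1) * c - 1) c.
Proof.
move=> _ _ k2_gt0 k2_lt_k1 a_gt0 c_gt0 _ k1c_le top_lt.
exact: in_A_witness.
Qed.
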